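(* Let $p$ be a prime and $f>1$ an integer, and let $l=f$ if $f$ is odd and $l=2f$ if $f$ is even. Define $\boldsymbol{\mu}=(\mu_0(x),\dots,\mu_{f-1}(x))$ by $\mu_0(x)=x-1$, $\mu_1(x)=p-2-x$, and $\mu_j(x)=p-1-x$ for $2\leq j\leq f-1$, and $\boldsymbol{\mu}^{(k)}=g^{k-1}\boldsymbol{\mu}\circ g^{k-2}\boldsymbol{\mu}\circ\cdots\circ g\boldsymbol{\mu}\circ\boldsymbol{\mu}$ for $1\leq k\leq l$. Then the $2l-1$ tuples $\boldsymbol{\mu}^{(1)},\boldsymbol{\mu}^{(2)},\dots,\boldsymbol{\mu}^{(l)},g\boldsymbol{\mu}^{(1)},g\boldsymbol{\mu}^{(2)},\dots,g\boldsymbol{\mu}^{(l-1)}$ are pairwise distinct elements of $(\mathbb{Z}\pm x)^f$.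
   Context: $(\mathbb{Z}\pm x)^f$ denotes the set of $f$-tuples $(\lambda_0(x),\dots,\lambda_{f-1}(x))$ of polynomials of the form $a\pm x$ with $a\in\mathbb{Z}$. Composition is componentwise: $\boldsymbol{\lambda}\circ\boldsymbol{\lambda}'=(\lambda_0(\lambda'_0(x)),\dots,\lambda_{f-1}(\lambda'_{f-1}(x)))$. The cyclic shift $g$ acts by $(g\boldsymbol{\lambda})_j=\lambda_{j+1}$, indices modulo $f$. *)

From mathcomp Require Import all_boot all_order all_algebra.
Set Implicit Arguments. Unset Strict Implicit. Unset Printing Implicit Defensive.
Import GRing.Theory Num.Theory.
Local Open Scope ring_scope.

Definition ptuple (f : nat) := {ffun 'I_f -> {poly int}}.

Definition in_Zpmx (f : nat) (lam : ptuple f) : Prop :=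
  forall j : 'I_f, exists a : int, lam j = a%:P + 'X \/ lam j = a%:P - 'X.

Definition pcomp (f : nat) (lam lam' : ptuple f) : ptuple f :=
  [ffun j => (lam j) \Po (lam' j)].

Definition gshift (f : nat) (lam : ptuple f) : ptuple f :=
  [ffun j => lam (ordS j)].

Definition gpow (f : nat) (k : nat) (lam : ptuple f) : ptuple f :=
  iter k (@gshift f) lam.

Definition mu (p f : nat) : ptuple f :=
  [ffun j : 'I_f => if val j == 0%N then 'X - 1
                    else if val j == 1%N then (p%:Z - 2)%:P - 'X
                    else (p%:Z - 1)%:P - 'X].

(* mu^(k) = g^{k-1} mu o ... o g mu o mu, for k >= 1 (mu^(0) unused). *)
Fixpoint muk (p f : nat) (k : nat) : ptuple f :=
  match k with
  | 0%N => mu p f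
  | 1%N => mu p f
  | k'.+1 => pcomp (gpow k' (mu p f)) (muk p f k')
  end.

Definition ell (f : nat) : nat := if odd f then f else (2 * f)%N.

Definition mu_list (p f : nat) : seq (ptuple f) :=
  [seq muk p f k | k <- iota 1 (ell f)] ++
  [seq gshift (muk p f k) | k <- iota 1 (ell f).-1].

(* Every component of a composite of the mu's is a map x |-> t +- x, and these
   maps form the infinite dihedral group; in suitable coordinates mu_j does not
   even depend on p. The j-th component of
   mu^(k) is P(j+k) P(j)^-1, where P(n) = mu_(n-1) o ... o mu_0 (indices mod f).
   The translation part of P(n) is -1 when n = 1 (mod f) and 0 otherwise, and
   when f is even P(n + f) and P(n) have opposite reflection parts. If
   mu^(a) = mu^(b), comparing translation parts at a well-chosen j forces f to
   divide b - a; as b - a < l this means f is even and b = a + f, which the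
   reflection parts rule out. A coincidence mu^(a) = g mu^(b) is excluded in the
   same way by comparing the components j = 0 and j = 1. *)

From Pilot Require Import Defs.
From mathcomp Require Import all_boot all_order all_algebra.
From mathcomp Require Import zify ring.
Set Implicit Arguments.
Unset Strict Implicit.
Unset Printing Implicit Defensive.
Import GRing.Theory.
Local Open Scope ring_scope.

Definition pm_aff := (bool * int)%type.

Definition pm_comp (u v : pm_aff) : pm_aff :=
  (u.1 (+) v.1, u.2 + (if u.1 then - v.2 else v.2)).

Definition pm_id : pm_aff := (false, 0).

Lemma pm_compA : associative pm_comp.
Proof.
by case=> [[] a] [[] b] [[] c]; rewrite /pm_comp /=; congr pair; ring.
Qed.

Lemma pm_comp1 : right_id pm_id pm_comp.
Proof. by case=> [[] a]; rewrite /pm_comp /= ?oppr0 addr0. Qed.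

Lemma pm_1comp : left_id pm_id pm_comp.
Proof. by case=> [s a]; rewrite /pm_comp /= add0r. Qed.

(* [(s, t)] stands for [t + c - x] if [s] and for [t + x] otherwise: with this
   offset the composition law [pm_comp] does not involve [c]. *)
Definition pm_poly (c : int) (u : pm_aff) : {poly int} :=
  if u.1 then (u.2 + c)%:P - 'X else u.2%:P + 'X.

Lemma pm_poly_comp c u v : pm_poly c u \Po pm_poly c v = pm_poly c (pm_comp u v).
Proof.
case: u v => [[] a] [[] b]; rewrite /pm_poly /pm_comp /=;
  rewrite ?comp_polyB ?comp_polyD ?comp_polyC ?comp_polyX ?rmorphD ?rmorphN /=.
all: ring.
Qed.

Lemma pm_poly_inj c : injective (pm_poly c).
Proof.
move=> [[] a] [[] b] e;
  move: (congr1 (fun q : {poly int} => q`_0) e) (congr1 (fun q : {poly int} => q`_1) e);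
  rewrite /pm_poly /= ?coefB ?coefD !coefC !coefX /= => e0 e1; congr pair; lia.
Qed.

Lemma pm_poly_Zpm c u : exists a : int, pm_poly c u = a%:P + 'X \/ pm_poly c u = a%:P - 'X.
Proof. by case: u => [[] a]; [exists (a + c); right | exists a; left]. Qed.

Section Chains.

Variable f : nat.
Hypothesis f_gt1 : (1 < f)%N.

Definition mu_step (i : nat) : pm_aff :=
  if (i %% f == 0)%N then (false, -1)
  else if (i %% f == 1)%N then (true, -1) else (true, 0).

(* [mu_chain j k] is mu_(j+k-1) o ... o mu_j, the j-th component of mu^(k). *)
Fixpoint mu_chain (j k : nat) : pm_aff :=
  if k is k'.+1 then pm_comp (mu_step (j + k')) (mu_chain j k') else pm_id.

Definition mu_prefix (n : nat) : pm_aff := mu_chain 0 n.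

Lemma mu_chain_prefix j k : pm_comp (mu_chain j k) (mu_prefix j) = mu_prefix (j + k).
Proof.
elim: k => [|k IHk]; first by rewrite pm_1comp addn0.
by rewrite [mu_chain _ _]/= -pm_compA IHk addnS.
Qed.

Lemma mu_chain_mod j k : mu_chain (j %% f) k = mu_chain j k.
Proof. by elim: k => // k IHk; rewrite [LHS]/= [RHS]/= IHk /mu_step !modnDml. Qed.

Lemma mu_chain_modS j k : mu_chain (j %% f).+1 k = mu_chain j.+1 k.
Proof. by rewrite -[LHS]mu_chain_mod -[RHS]mu_chain_mod -(addn1 (j %% f)) modnDml addn1. Qed.

Lemma modnS_eq1 n : (n.+1 %% f == 1)%N = (f %| n)%N.
Proof.
have -> : 1%N = (1 %% f)%N by rewrite modn_small.
by rewrite -addn1 -{2}[1%N]add0n eqn_modDr mod0n.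
Qed.

Lemma mu_prefix_trans n : (mu_prefix n).2 = if (n %% f == 1)%N then -1 else 0.
Proof.
elim: n => [|n IHn]; first by rewrite mod0n; case: f f_gt1 => [|[]].
rewrite /mu_prefix [mu_chain _ _]/= -/(mu_prefix n) add0n modnS_eq1 /dvdn /mu_step.
case: eqP => [n0|_] /=; first by rewrite IHn n0 addr0.
by rewrite IHn; case: (_ == 1%N); rewrite /= ?opprK ?addNr ?oppr0.
Qed.

Lemma mu_prefix_sign n : (mu_prefix n.+1).1 = (mu_prefix n).1 (+) ~~ (f %| n)%N.
Proof.
rewrite /mu_prefix [mu_chain _ n.+1]/= add0n /mu_step /dvdn /pm_comp /=.
by case: (_ == 0%N); last case: (_ == 1%N); case: (mu_chain 0 n).1.
Qed.

Lemma mu_prefix_sign_small n : (n < f)%N -> (mu_prefix n.+1).1 = odd n.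
Proof.
elim: n => [|n IHn] lt_nf; first by rewrite mu_prefix_sign dvdn0.
rewrite mu_prefix_sign IHn ?(ltnW lt_nf) // /dvdn modn_small //=.
by case: (odd n).
Qed.

Lemma mu_prefix_sign_period n : ~~ odd f -> (mu_prefix (n + f)).1 = ~~ (mu_prefix n).1.
Proof.
move=> f_even; have f_pos : (0 < f)%N by exact: ltnW.
elim: n => [|n IHn].
  rewrite add0n -[in mu_prefix f](prednK f_pos) mu_prefix_sign_small ?prednK //.
  by move: f_even; rewrite -[in odd f](prednK f_pos) oddS negbK.
by rewrite addSn !mu_prefix_sign IHn (dvdn_addl _ (dvdnn f)) addNb.
Qed.

Lemma mu_prefix1 : mu_prefix 1 = (false, -1).
Proof. by rewrite /mu_prefix /= /mu_step mod0n. Qed.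

Lemma mu_prefix2 : mu_prefix 2 = (true, 0).
Proof. by rewrite /mu_prefix /= /mu_step mod0n modn_small. Qed.

Lemma ell_gt1 : (1 < ell f)%N.
Proof. by rewrite /ell; case: ifP => _; lia. Qed.

Lemma dvdn_lt_ell d : (0 < d < ell f)%N -> (f %| d)%N -> ~~ odd f /\ d = f.
Proof.
rewrite /ell => /andP[d_gt0 d_lt] /dvdnP[q def_d]; subst d.
have q_gt0 : (0 < q)%N by move: d_gt0; rewrite muln_gt0 => /andP[].
case: ifP d_lt => f_odd d_lt.
  by move: d_lt; rewrite -[X in (_ < X)%N]mul1n ltn_mul2r => /andP[_]; lia.
suff q1 : q = 1%N by rewrite q1 mul1n.
by move: d_lt; rewrite ltn_mul2r => /andP[_]; lia.
Qed.

Lemma mu_chain_inj a b : (0 < a <= ell f)%N -> (0 < b <= ell f)%N ->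
  (forall j, mu_chain j a = mu_chain j b) -> a = b.
Proof.
move=> /andP[a_gt0 a_le] /andP[b_gt0 b_le].
wlog lt_ab : a b a_gt0 a_le b_gt0 b_le / (a < b)%N => [wlog_lt eq_ab | eq_ab].
  case: (ltngtP a b) => // [lt_ab | lt_ba]; first exact: wlog_lt.
  by apply/esym/wlog_lt => // j; rewrite eq_ab.
exfalso.
have eq_prefix j : mu_prefix (j + a) = mu_prefix (j + b) by rewrite -!mu_chain_prefix eq_ab.
(* the translation part of [mu_prefix (j0 + a)] is -1 *)
pose j0 := (a * (f - 1)).+1.
have j0a1 : ((j0 + a) %% f == 1)%N.
  by rewrite (_ : j0 + a = a * f + 1)%N ?modnMDl ?modn_small //; nia.
have j0b1 : ((j0 + b) %% f == 1)%N.
  by move: (congr1 snd (eq_prefix j0)); rewrite !mu_prefix_trans j0a1; case: ifP.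
have f_dvd : (f %| b - a)%N.
  by rewrite -eqn_mod_dvd ?(ltnW lt_ab) // -(eqn_modDl j0) (eqP j0a1) (eqP j0b1).
have [f_even def_b] : ~~ odd f /\ (b - a)%N = f.
  by apply: dvdn_lt_ell; rewrite // subn_gt0 lt_ab; lia.
move: (congr1 fst (eq_prefix 0)).
by rewrite !add0n (_ : b = a + f)%N ?mu_prefix_sign_period //; [case: (mu_prefix a).1 | lia].
Qed.

Lemma mu_chain_neq_shift a b :
  (0 < b < ell f)%N -> ~ (forall j, mu_chain j a = mu_chain j.+1 b).
Proof.
move=> b_range eq_ab.
have prefix_b1 : mu_prefix b.+1 = pm_comp (mu_prefix a) (false, -1).
  by rewrite -add1n -mu_chain_prefix -eq_ab mu_prefix1.
have prefix_b2 : mu_prefix b.+2 = pm_comp (mu_prefix a.+1) (true, 1).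
  rewrite -add2n -mu_chain_prefix -eq_ab mu_prefix2.
  by rewrite -[a.+1]add1n -mu_chain_prefix mu_prefix1 -pm_compA.
(* The translation parts of prefixes lie in {0, -1}. *)
case refl_a : (mu_prefix a).1.
  have a1 : (a %% f == 1)%N.
    move: (congr1 snd prefix_b1); rewrite /pm_comp refl_a !mu_prefix_trans /=.
    by case: ifP; case: ifP => //= _ _; lia.
  have not_dvd_a : ~~ (f %| a)%N by rewrite /dvdn (eqP a1).
  move: (congr1 snd prefix_b2); rewrite /pm_comp mu_prefix_sign refl_a (negPf not_dvd_a).
  by rewrite !mu_prefix_trans (modnS_eq1 a) (negPf not_dvd_a) /=; case: ifP => _; lia.
have dvd_b : (f %| b)%N.
  move: (congr1 snd prefix_b1); rewrite /pm_comp refl_a !mu_prefix_trans modnS_eq1 /=.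
  by case: ifP => // _; case: ifP => _; lia.
have [f_even def_b] := dvdn_lt_ell b_range dvd_b.
move: (congr1 fst prefix_b1); rewrite /pm_comp refl_a def_b -[f.+1]add1n.
by rewrite mu_prefix_sign_period // mu_prefix1.
Qed.

End Chains.

Lemma ffun_inj_comp (I : finType) (T U : Type) (h : T -> U) (F G : I -> T) :
  injective h -> [ffun i => h (F i)] = [ffun i => h (G i)] -> F =1 G.
Proof. by move=> h_inj /ffunP eqFG i; apply: h_inj; move: (eqFG i); rewrite !ffunE. Qed.

Lemma eq_periodic_ord (T : Type) (n : nat) (F G : nat -> T) : (0 < n)%N ->
  (forall j, F (j %% n)%N = F j) -> (forall j, G (j %% n)%N = G j) ->
  (forall j : 'I_n, F j = G j) -> F =1 G.
Proof.
move=> n_gt0 F_per G_per eqFG j.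
by rewrite -F_per -G_per (eqFG (Ordinal (ltn_pmod j n_gt0))).
Qed.

Lemma gshift_inj (f : nat) : injective (@gshift f).
Proof.
move=> lam lam' /ffunP eq_shift; apply/ffunP => j.
by move: (eq_shift (ord_pred j)); rewrite !ffunE ord_predK.
Qed.

Section MuTuples.

Variables p f : nat.
Hypothesis f_gt1 : (1 < f)%N.

Local Notation pm := (pm_poly (p%:Z - 1)).

Lemma muE : mu p f = [ffun j : 'I_f => pm (mu_step f j)].
Proof.
apply/ffunP => j; rewrite !ffunE /mu_step modn_small //.
case: eqP => _; first by rewrite /pm_poly /=; ring.
by case: eqP => _; rewrite /pm_poly /=; congr (_%:P - _); ring.
Qed.

Lemma gpow_muE k : gpow k (mu p f) = [ffun j : 'I_f => pm (mu_step f (j + k))].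
Proof.
elim: k => [|k IHk].
  by rewrite /gpow /= muE; apply/ffunP => j; rewrite !ffunE addn0.
rewrite /gpow iterS -/(gpow k (mu p f)) IHk; apply/ffunP => j.
by rewrite !ffunE /mu_step !modnDml addSnnS.
Qed.

Lemma mukE k : (0 < k)%N -> muk p f k = [ffun j : 'I_f => pm (mu_chain f j k)].
Proof.
case: k => // k _; elim: k => [|k IHk].
  rewrite -[muk p f 1]/(mu p f) muE; apply/ffunP => j.
  by rewrite !ffunE /= addn0 pm_comp1.
rewrite -[muk p f k.+2]/(Defs.pcomp (gpow k.+1 (mu p f)) (muk p f k.+1)).
by rewrite IHk gpow_muE; apply/ffunP => j; rewrite !ffunE pm_poly_comp.
Qed.

Lemma gshift_mukE k : (0 < k)%N ->
  gshift (muk p f k) = [ffun j : 'I_f => pm (mu_chain f j.+1 k)].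
Proof. by move=> k_gt0; apply/ffunP => j; rewrite !ffunE mukE // ffunE mu_chain_mod. Qed.

Lemma uniq_muk n : (n <= ell f)%N -> uniq [seq muk p f k | k <- iota 1 n].
Proof.
move=> le_n; rewrite map_inj_in_uniq ?iota_uniq // => a b; rewrite !mem_iota => a_in b_in.
rewrite !mukE ?(andP a_in).1 ?(andP b_in).1 // => /(ffun_inj_comp (@pm_poly_inj _)).
move/(eq_periodic_ord (ltnW f_gt1) (mu_chain_mod f^~ a) (mu_chain_mod f^~ b)) => eq_ab.
by apply: (mu_chain_inj f_gt1 _ _ eq_ab); lia.
Qed.

Lemma muk_neq_gshift a b : (0 < a)%N -> (0 < b < ell f)%N -> muk p f a != gshift (muk p f b).
Proof.
move=> a_gt0 b_range; apply/eqP; rewrite mukE // gshift_mukE ?(andP b_range).1 //.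
move/(ffun_inj_comp (@pm_poly_inj _)).
move/(eq_periodic_ord (ltnW f_gt1) (mu_chain_mod f^~ a) (mu_chain_modS f^~ b)).
exact: mu_chain_neq_shift.
Qed.

End MuTuples.

Theorem lemma2p2 (p f : nat) (hp : prime p) (hf : (1 < f)%N) :
  size (mu_list p f) = (2 * ell f - 1)%N /\
  uniq (mu_list p f) /\
  (forall lam, lam \in mu_list p f -> in_Zpmx lam).
Proof.
have l_gt1 := ell_gt1 hf.
split; first by rewrite size_cat !size_map !size_iota; lia.
split.
  rewrite cat_uniq uniq_muk // (map_comp (@gshift f) (muk p f)).
  rewrite (map_inj_uniq (@gshift_inj f)) uniq_muk ?leq_pred // andbT.
  apply/hasPn => _ /mapP[_ /mapP[b b_in ->] ->]; apply/mapP => -[a a_in /esym/eqP].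
  by apply/negP/muk_neq_gshift; move: a_in b_in; rewrite !mem_iota; lia.
move=> lam; rewrite mem_cat => /orP[] /mapP[k]; rewrite mem_iota => /andP[k_gt0 _] -> j.
  by rewrite mukE // ffunE; apply: pm_poly_Zpm.
by rewrite gshift_mukE // ffunE; apply: pm_poly_Zpm.
Qed.
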